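(* Let $t_1, t_2 \in \mathcal{L}_r$ with $t_1 =_{\mathcal{L}} t_2$. Then for all finite $E \subseteq \mathcal{X}$, $x \in \mathcal{X}$, $S \in \mathbb{N}$: $A(E, x, S)$ is one of the sublevels of $t_1$ if and only if $A(E, x, S)$ is one of the sublevels of $t_2$.
   Context: $\mathcal{X}$ is a countable set of variables; a valuation is $\sigma\colon\mathcal{X}\to\mathbb{N}$. For finite $E\subseteq\mathcal{X}$, $x\in\mathcal{X}$, $S\in\mathbb{N}$, the sublevels $A(E,x,S)$ and $B(E,S)$ have values $[A(E,x,S)]_\sigma = 0$ if some $y\in E$ has $\sigma(y)=0$, and $\sigma(x)+S$ otherwise; $[B(E,S)]_\sigma=0$ if some $y\in E$ has $\sigma(y)=0$, and $S$ otherwise. $\mathcal{L}_s$ is the set of sublevels $A(E,x,S)$ with $x\in E$ and $B(E,S)$ with $S>0$. $t_1\leqslant_{\mathcal{L}} t_2$ (resp. $t_1 =_{\mathcal{L}} t_2$) means $[t_1]_\sigma\le[t_2]_\sigma$ (resp. $=$) for every valuation $\sigma$; $\max$ of a finite family is evaluated pointwise (empty max has value $0$). Two sublevels $u,v$ are incomparable if neither $u\leqslant_{\mathcal{L}} v$ nor $v\leqslant_{\mathcal{L}} u$. A minimal representation is a formal expression $\max(u_1,\ldots,u_n)$ where $\{u_1,\ldots,u_n\}$ is a finite set of elements of $\mathcal{L}_s$ that are pairwise incomparable ($u_i$ and $u_j$ incomparable for $i\ne j$); $\mathcal{L}_r$ is the set of minimal representations, and the $u_i$ are called its sublevels. *)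

From HB Require Import structures.
From mathcomp Require Import all_boot.
From mathcomp Require Import finmap.
From Stdlib Require List.
Set Implicit Arguments. Unset Strict Implicit. Unset Printing Implicit Defensive.

Local Open Scope fset_scope.

(* Variables: the countable(-ly infinite) set X is modelled by nat.
   Valuations: nat -> nat. *)
Definition valuation := nat -> nat.

Inductive sublevel : Type :=
| SA : {fset nat} -> nat -> nat -> sublevel
| SB : {fset nat} -> nat -> sublevel.

Definition some_zero (E : {fset nat}) (sigma : valuation) : bool :=
  [exists y : E, sigma (val y) == 0%N].

Definition eval_sub (u : sublevel) (sigma : valuation) : nat :=
  match u with
  | SA E x s => if some_zero E sigma then 0%N else (sigma x + s)%N
  | SB E s => if some_zero E sigma then 0%N else s
  end.

Definition sub_le (u v : sublevel) : Prop :=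
  forall sigma : valuation, (eval_sub u sigma <= eval_sub v sigma)%N.

Definition incomparable (u v : sublevel) : Prop :=
  ~ sub_le u v /\ ~ sub_le v u.

Definition in_Ls (u : sublevel) : Prop :=
  match u with
  | SA E x _ => x \in E
  | SB E s => (0 < s)%N
  end.

(* A formal max expression, given by its (finite) list of sublevels. *)
Definition eval_max (t : list sublevel) (sigma : valuation) : nat :=
  foldr (fun u acc => maxn (eval_sub u sigma) acc) 0%N t.

Definition eq_L (t1 t2 : list sublevel) : Prop :=
  forall sigma : valuation, eval_max t1 sigma = eval_max t2 sigma.

Definition in_Lr (t : list sublevel) : Prop :=
  List.NoDup t /\
  (forall u, List.In u t -> in_Ls u) /\
  (forall u v, List.In u t -> List.In v t -> u <> v -> incomparable u v).

(** Fix [A(E,x,S)] in [t1] and evaluate both sides at the valuation [peak E x N]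
    that is [N] at [x], [1] on the rest of [E] and [0] elsewhere, with [N] above
    every constant of [t1] and [t2].  Only sublevels [A(E',x,s)] with [E' ⊆ E]
    reach height [N] there, and by pairwise incomparability none of them in
    [t1] has [s > S]; so the common maximum is [N + S] and [t2] contains some
    [A(E2,x,S)] with [E2 ⊆ E].  By symmetry [t1] contains [A(E3,x,S)] with
    [E3 ⊆ E2 ⊆ E], and incomparability in [t1] forces [E3 = E], hence [E2 = E]. *)
From mathcomp Require Import all_boot.
From mathcomp Require Import finmap.
From Stdlib Require List.
From mathcomp Require Import zify.
Set Implicit Arguments. Unset Strict Implicit. Unset Printing Implicit Defensive.
Local Open Scope fset_scope.

Lemma some_zeroP (E : {fset nat}) (sigma : valuation) :
  reflect (exists2 y, y \in E & sigma y = 0%N) (some_zero E sigma).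
Proof.
apply: (iffP existsP) => [[[y yE] /= /eqP]|[y yE /eqP]]; first by exists y.
by exists [` yE].
Qed.

Lemma sub_le_SA (E E' : {fset nat}) x S S' :
  E' `<=` E -> (S <= S')%N -> sub_le (SA E x S) (SA E' x S').
Proof.
move=> sE'E leSS' sigma /=; case: ifP => // /negbT/negP nzE.
suff -> : some_zero E' sigma = false by rewrite leq_add2l.
apply/negbTE/negP => /some_zeroP [y yE' y0]; apply: nzE; apply/some_zeroP.
by exists y; first exact: (fsubsetP sE'E).
Qed.

Section EvalMax.

Variables (t : list sublevel) (sigma : valuation).

Lemma eval_max_cons u r :
  eval_max (u :: r) sigma = maxn (eval_sub u sigma) (eval_max r sigma).
Proof. by []. Qed.

Lemma eval_max_ge u : List.In u t -> (eval_sub u sigma <= eval_max t sigma)%N.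
Proof.
elim: t => //= v r IH [->|/IH le_u_r]; first exact: leq_maxl.
exact: leq_trans le_u_r (leq_maxr _ _).
Qed.

Lemma eval_max_le m :
  (forall u, List.In u t -> eval_sub u sigma <= m)%N -> (eval_max t sigma <= m)%N.
Proof.
elim: t => //= v r IH le_m; rewrite geq_max le_m /=; last by left.
by apply: IH => u ur; apply: le_m; right.
Qed.

Lemma eval_max_attained :
  (0 < eval_max t sigma)%N ->
  exists2 u, List.In u t & eval_sub u sigma = eval_max t sigma.
Proof.
elim: t => // v r IH; rewrite eval_max_cons.
case: (leqP (eval_max r sigma) (eval_sub v sigma)) => [_ _|lt_v_r _].
  by exists v; first left.
have [u ur eval_u] := IH (leq_ltn_trans (leq0n _) lt_v_r).
by exists u; first right.
Qed.

End EvalMax.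

Lemma eq_L_sym t1 t2 : eq_L t1 t2 -> eq_L t2 t1.
Proof. by move=> eq12 sigma; rewrite eq12. Qed.

Definition sub_const (u : sublevel) : nat :=
  match u with SA _ _ s | SB _ s => s end.

Definition max_const (t : list sublevel) : nat :=
  foldr (fun u m => maxn (sub_const u) m) 0%N t.

Lemma sub_const_le_max t u : List.In u t -> (sub_const u <= max_const t)%N.
Proof.
elim: t => //= v r IH [->|/IH le_u_r]; first exact: leq_maxl.
exact: leq_trans le_u_r (leq_maxr _ _).
Qed.

Definition peak (E : {fset nat}) (x N : nat) : valuation :=
  fun y => if y == x then N else if y \in E then 1%N else 0%N.

Section Peak.

Variables (E : {fset nat}) (x N : nat).
Hypotheses (xE : x \in E) (N_gt0 : (0 < N)%N).

Lemma peak_le1 y : y != x -> (peak E x N y <= 1)%N.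
Proof. by rewrite /peak => /negbTE ->; case: (y \in E). Qed.

Lemma some_zero_peak (E' : {fset nat}) :
  some_zero E' (peak E x N) = ~~ (E' `<=` E).
Proof.
apply/some_zeroP/fsubsetPn => [[y yE' y0]|[y yE' yNE]]; exists y => //.
  by apply/negP => yE; move: y0; rewrite /peak yE; case: eqP => _; lia.
by rewrite /peak (negbTE yNE); case: eqP => // yx; rewrite yx xE in yNE.
Qed.

Lemma peak_high u :
  ((sub_const u).+1 < N)%N -> (N <= eval_sub u (peak E x N))%N ->
  exists2 E', E' `<=` E &
    exists s, u = SA E' x s /\ eval_sub u (peak E x N) = (N + s)%N.
Proof.
case: u => [E' y s|E' s] /= ltN; rewrite some_zero_peak;
  case: ifP => [_|/negbFE sE'E]; try lia.
have [yx|/peak_le1] := eqVneq y x; last lia.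
by rewrite yx /peak eqxx => _; exists E'; last exists s.
Qed.

End Peak.

Section Representation.

Variables (t : list sublevel) (E : {fset nat}) (x S N : nat).
Hypothesis (bound_t : (max_const t).+1 < N).

Let const_lt u : List.In u t -> (sub_const u).+1 < N.
Proof. by move=> /sub_const_le_max le_u; apply: leq_ltn_trans bound_t. Qed.

Let N_gt0 : (0 < N)%N. Proof. exact: ltn_trans (ltn0Sn _) bound_t. Qed.

Lemma eval_max_peak :
  in_Lr t -> List.In (SA E x S) t -> eval_max t (peak E x N) = (N + S)%N.
Proof.
move=> [_ [in_t_Ls incomp]] At; have xE : x \in E := in_t_Ls _ At.
have eval_A : eval_sub (SA E x S) (peak E x N) = (N + S)%N.
  by rewrite /= (some_zero_peak xE N_gt0) fsubset_refl /= /peak eqxx.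
apply/eqP; rewrite eqn_leq -{2}eval_A eval_max_ge // andbT.
apply: eval_max_le => u ut; case: (leqP N (eval_sub u (peak E x N))); last lia.
move=> /(peak_high xE N_gt0 (const_lt ut)) [E' sE'E [s [eq_u ->]]]; subst u.
rewrite leq_add2l leqNgt; apply/negP => ltSs.
have neq : SA E x S <> SA E' x s by move=> [_ eSs]; rewrite eSs ltnn in ltSs.
by case: (incomp _ _ At ut neq) => + _; apply; apply: sub_le_SA => //; apply: ltnW.
Qed.

Lemma peak_witness :
  x \in E -> eval_max t (peak E x N) = (N + S)%N ->
  exists2 E', E' `<=` E & List.In (SA E' x S) t.
Proof.
move=> xE max_t.
have max_gt0 : (0 < eval_max t (peak E x N))%N by rewrite max_t addn_gt0 N_gt0.
have [u ut] := eval_max_attained max_gt0; rewrite max_t => eval_u.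
have [|E' sE'E [s [equ]]] := peak_high xE N_gt0 (const_lt ut); first lia.
by rewrite eval_u => /addnI eSs; exists E'; rewrite // eSs -equ.
Qed.

End Representation.

Lemma in_Lr_SA_fsubset t (E E' : {fset nat}) x S :
  in_Lr t -> List.In (SA E x S) t -> List.In (SA E' x S) t -> E' `<=` E -> E' = E.
Proof.
move=> [_ [_ incomp]] At A't sE'E; have [//|nE'E] := eqVneq E' E; exfalso.
have neq : SA E x S <> SA E' x S by move=> [eEE']; rewrite eEE' eqxx in nE'E.
by case: (incomp _ _ At A't neq) => + _; apply; apply: sub_le_SA.
Qed.

Lemma eq_L_SA_fsubset t1 t2 N (E : {fset nat}) x S :
  (max_const t1).+1 < N -> (max_const t2).+1 < N ->
  in_Lr t1 -> eq_L t1 t2 -> List.In (SA E x S) t1 ->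
  exists2 E', E' `<=` E & List.In (SA E' x S) t2.
Proof.
move=> bound1 bound2 Lr1 eq12 At1.
have [_ [in_t1_Ls _]] := Lr1.
apply: (peak_witness bound2); first exact: in_t1_Ls At1.
by rewrite -eq12 (eval_max_peak bound1 Lr1 At1).
Qed.

Lemma eq_L_SA_in t1 t2 (E : {fset nat}) x S :
  in_Lr t1 -> in_Lr t2 -> eq_L t1 t2 ->
  List.In (SA E x S) t1 -> List.In (SA E x S) t2.
Proof.
move=> Lr1 Lr2 eq12 At1.
pose N := (max_const t1 + max_const t2).+2.
have bound1 : (max_const t1).+1 < N by rewrite /N; lia.
have bound2 : (max_const t2).+1 < N by rewrite /N; lia.
have [E2 sE2E A2t2] := eq_L_SA_fsubset bound1 bound2 Lr1 eq12 At1.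
have [E3 sE3E2 A3t1] := eq_L_SA_fsubset bound2 bound1 Lr2 (eq_L_sym eq12) A2t2.
have eE3E := in_Lr_SA_fsubset Lr1 At1 A3t1 (fsubset_trans sE3E2 sE2E).
suff -> : E = E2 by [].
by apply/eqP; rewrite eqEfsubset sE2E -{1}eE3E sE3E2.
Qed.

Theorem proposition31 (t1 t2 : list sublevel) :
  in_Lr t1 -> in_Lr t2 -> eq_L t1 t2 ->
  forall (E : {fset nat}) (x s : nat),
    List.In (SA E x s) t1 <-> List.In (SA E x s) t2.
Proof.
move=> Lr1 Lr2 eq12 E x s; split; first exact: eq_L_SA_in.
exact: eq_L_SA_in (eq_L_sym eq12).
Qed.
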